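(* Consider the CDM model and a boundary or trivial equilibrium $\bm{\hat{y}}$ of its age-structured map, with adult part $\bm{\hat{x}}$ such that $\hat x_i=0$ for $i\in Z$ (a nonempty subset of $\mathcal{M}$) and $\hat x_i>0$ for $i\in\mathcal{M}\setminus Z$. Assume the principal submatrix $\bm{J}^\bullet$ of the Jacobian of the map at $\bm{\hat{y}}$ indexed by all age classes of the species in $\mathcal{M}\setminus Z$ satisfies $\rho(\bm{J}^\bullet)<1$ (e.g. guaranteed by Proposition 1's condition for the subsystem; vacuous if $Z=\mathcal{M}$). If $$\frac{\tilde\lambda_i-z_i}{z_i} < q_i^{-1}\sum_{k\in\mathcal{M}\setminus Z}A_{ik}\hat{x}_k\quad\text{for all } i\in Z$$ (the empty sum being $0$ in the trivial case $Z=\mathcal{M}$), then the Jacobian of the map at $\bm{\hat{y}}$ has spectral radius less than $1$, i.e. $\bm{\hat{y}}$ is locally asymptotically stable.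
   Context: CDM model: $m\ge1$ species $\mathcal{M}=\{1,\dots,m\}$, delays $\delta_i\in\{0,1,\dots\}$, survival probabilities $\sigma_{a\mid i}\in(0,1]$ ($a<\delta_i$), adult survival $\sigma_{\delta_i\mid i}\in(0,1)$, $z_i=1-\sigma_{\delta_i\mid i}$, fecundity $\lambda_i>0$, $\tilde\lambda_i=\lambda_i\prod_{a=0}^{\delta_i-1}\sigma_{a\mid i}$ (empty product $=1$), $\bm{A}\ge\bm{0}$ with positive diagonal, $\bm{q}>\bm{0}$. Per capita growth $G_i(\bm{x})=\lambda_i/(1+q_i^{-1}\sum_kA_{ik}x_k)$. Age-structured map $h$ on $\bm{y}=(y_{a\mid i})$, $0\le a\le\delta_i$, with adults $\bm{x}=(y_{\delta_1\mid1},\dots,y_{\delta_m\mid m})^\top$: if $\delta_i>0$, $h_{0\mid i}(\bm{y})=G_i(\bm{x})y_{\delta_i\mid i}$, $h_{a\mid i}(\bm{y})=\sigma_{a-1\mid i}y_{a-1\mid i}$ ($1\le a\le\delta_i-1$), $h_{\delta_i\mid i}(\bm{y})=\sigma_{\delta_i-1\mid i}y_{\delta_i-1\mid i}+\sigma_{\delta_i\mid i}y_{\delta_i\mid i}$; if $\delta_i=0$, $h_{0\mid i}(\bm{y})=\sigma_{0\mid i}y_{0\mid i}+G_i(\bm{x})y_{0\mid i}$. $\rho$ denotes spectral radius. *)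

From HB Require Import structures.
From mathcomp Require Import all_boot all_order all_algebra.
From mathcomp Require Import complex.
From mathcomp Require Import all_classical all_reals.
From mathcomp Require Import topology normedtype derive.
Set Implicit Arguments. Unset Strict Implicit. Unset Printing Implicit Defensive.
Import Order.TTheory GRing.Theory Num.Theory numFieldNormedType.Exports.
Local Open Scope ring_scope.

Definition age_idx (m : nat) (delta : 'I_m -> nat) : finType :=
  {i : 'I_m & 'I_(delta i).+1}.

Section CDM.
Variables (R : realType) (m : nat) (delta : 'I_m -> nat)
  (sigma : 'I_m -> nat -> R) (lambda : 'I_m -> R) (A : 'M[R]_m) (q : 'I_m -> R).

Definition adults (y : age_idx delta -> R) (k : 'I_m) : R :=
  y (existT _ k ord_max).

Definition Gfun (i : 'I_m) (x : 'I_m -> R) : R :=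
  lambda i / (1 + (q i)^-1 * \sum_(k < m) A i k * x k).

Definition lambda_tilde (i : 'I_m) : R := lambda i * \prod_(a < delta i) sigma i a.

Definition zrate (i : 'I_m) : R := 1 - sigma i (delta i).

Definition cdm_map (y : age_idx delta -> R) (p : age_idx delta) : R :=
  let: existT i a := p in
  let G := Gfun i (adults y) in
  if (a : nat) == 0%N then
    (if delta i == 0%N then sigma i 0 * y (existT _ i a) + G * y (existT _ i a)
     else G * y (existT _ i ord_max))
  else if (a < delta i)%N then
    sigma i (a.-1) * y (existT _ i (inord a.-1))
  else
    sigma i (a.-1) * y (existT _ i (inord a.-1))
      + sigma i (delta i) * y (existT _ i ord_max).

End CDM.

Definition partial_deriv (R : realType) (T : finType) (F : (T -> R) -> T -> R)
  (y0 : T -> R) (p r : T) : R :=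
  derive1 (fun t : R => F (fun s => y0 s + (if s == r then t else 0)) p) 0.

Definition principal_submx (R : Type) (T : finType) (S : {set T}) (f : T -> T -> R)
  : 'M[R]_#|S| := \matrix_(a, b) f (enum_val a) (enum_val b).

Definition jacobian_mx (R : realType) (T : finType) (F : (T -> R) -> T -> R) (y0 : T -> R)
  : 'M[R]_#|[set: T]| := principal_submx [set: T] (partial_deriv F y0).

Definition spectral_radius_lt1 (R : rcfType) (n : nat) (M : 'M[R]_n) : Prop :=
  forall mu : R[i], eigenvalue (map_mx (fun x : R => x%:C%C) M) mu -> `|mu| < 1.

From HB Require Import structures.
From mathcomp Require Import all_boot all_order all_algebra.
From mathcomp Require Import complex.
From mathcomp Require Import all_classical all_reals.
From mathcomp Require Import topology normedtype derive.
From mathcomp Require Import ring.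
Import Order.TTheory GRing.Theory Num.Theory numFieldNormedType.Exports.
Local Open Scope ring_scope.
Local Open Scope complex_scope.

(* At the equilibrium an invading species j in Z has no adults.  Hence the rows of
   the Jacobian belonging to the age classes of j vanish outside these classes, and
   on them they form a Leslie block with fecundity G_j(xhat).  A left eigenvector of
   the Jacobian is therefore either nonzero on the age classes of the residents, and
   then it is a left eigenvector of the resident block, or it vanishes there and
   restricts to a left eigenvector of the Leslie block of one invader.  An eigenvalue
   mu of that block satisfies G * prod sigma = mu^delta (mu - sigma_delta); when
   |mu| >= 1 the right-hand side has modulus at least 1 - sigma_delta, while the
   invasion condition says exactly that G * prod sigma < 1 - sigma_delta. *)

Lemma derive1_caratheodory (R : realType) (f g : R -> R) (x : R) :
  derivable g x 1 -> (forall t, f t = f x + (t - x) * g t) -> derive1 f x = g x.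
Proof.
move=> dg fE.
have -> : f = cst (f x) + (id - cst x) * g by apply/funext => t; rewrite fE.
have did : derivable (@id R) x 1 := @derivable_id _ _ _ _.
have dc (c : R) : derivable (cst c) x 1 := derivable_cst c x 1.
have dl : derivable (id - cst x : R -> R) x 1 := derivableB did (dc x).
rewrite derive1E (deriveD (dc _) (derivableM dl dg)) (deriveM dl dg).
rewrite (deriveB did (dc _)) derive_id !derive_cst.
by rewrite !fctE subrr scale0r !add0r subr0 scaler1.
Qed.

Lemma derivable_div_affine (R : realType) (c d e x : R) :
  d + e * x != 0 -> derivable (fun t : R => c / (d + e * t)) x 1.
Proof. by move=> nz; apply: derivableM => //; apply: derivableV. Qed.

Section LeftEigenvectors.
Variables (F : fieldType) (T : finType).

(* [eigenvalue] is defined through row vectors, v *m M = mu *: v. *)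
Definition left_eigen_on (S : {set T}) (f : T -> T -> F) (mu : F) (v : T -> F) :=
  forall r, r \in S -> \sum_(p in S) v p * f p r = mu * v r.

Lemma map_principal_submx (K : Type) (phi : F -> K) (S : {set T}) (f : T -> T -> F) :
  map_mx phi (principal_submx S f) = principal_submx S (fun p r => phi (f p r)).
Proof. by apply/matrixP => a b; rewrite !mxE. Qed.

Lemma eigenvalue_principal_submxP (S : {set T}) (f : T -> T -> F) (mu : F) :
  eigenvalue (principal_submx S f) mu <->
  exists2 v : T -> F, (exists2 p, p \in S & v p != 0) & left_eigen_on S f mu v.
Proof.
split.
- case/eigenvalueP => w wf w0.
  have [k wk] : exists k, w 0 k != 0.
    apply/existsP; apply: contraR w0 => /existsPn w0'.
    by apply/eqP/rowP => k; rewrite mxE; apply/eqP/negPn.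
  have kS := enum_valP k.
  exists (fun p => w 0 (enum_rank_in kS p)).
    by exists (enum_val k); rewrite // enum_valK_in.
  move=> r rS; move/rowP: wf => /(_ (enum_rank_in kS r)); rewrite !mxE => <-.
  rewrite (big_enum_rank kS); apply: eq_bigr => p pS.
  by rewrite mxE !enum_rankK_in.
- case=> v [p pS vp] eig; apply/eigenvalueP; exists (\row_k v (enum_val k)).
    apply/rowP => k; rewrite mxE [RHS]mxE mxE -eig ?enum_valP // (big_enum_rank pS).
    by apply: eq_bigr => r rS; rewrite /principal_submx !mxE !enum_rankK_in.
  apply: contraNneq vp => /rowP/(_ (enum_rank_in pS p)).
  by rewrite !mxE enum_rankK_in // => ->.
Qed.

Lemma left_eigen_on_sub (U S : {set T}) (f : T -> T -> F) (mu : F) (v : T -> F) :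
  left_eigen_on U f mu v -> S \subset U ->
  (forall p r, p \in U :\: S -> r \in S -> v p * f p r = 0) ->
  left_eigen_on S f mu v.
Proof.
move=> eig sSU vanish r rS; rewrite -eig; last by rewrite (fintype.subsetP sSU).
rewrite [RHS](big_setID S) /=.
by rewrite (finset.setIidPr sSU) [X in _ + X]big1 ?addr0 // => p pUS; apply: vanish.
Qed.

End LeftEigenvectors.
Arguments left_eigen_on {F T}.
Arguments left_eigen_on_sub {F T U S f mu v}.

Lemma sum_tag_eq (V : nmodType) (I : finType) (T_ : I -> finType) (i : I)
    (F : {k : I & T_ k} -> V) :
  \sum_(p | tag p == i) F p = \sum_(a : T_ i) F (Tagged T_ a).
Proof.
rewrite -(@big_pred1_eq V 0 +%R _ i (fun k => \sum_(a : T_ k) F (Tagged T_ a))) sig_big_dep /=.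
by apply: eq_big => [p | [k a] _]; rewrite ?andbT.
Qed.

Lemma ltr_div1D_of_ltr_subdiv (F : realFieldType) (l z s : F) :
  0 < z -> 0 <= s -> (l - z) / z < s -> l / (1 + s) < z.
Proof.
move=> z0 s0; rewrite ltr_pdivrMr // ltrBlDl => lt_l.
by rewrite ltr_pdivrMr ?ltr_wpDr // mulrDr mulr1 [z * s]mulrC.
Qed.

(* Entry (a, b) is the rate from age class b to age class a: fecundity [G] from the
   adults into class 0, survival [s b] from class b into class b.+1, and adult
   survival [s n]. *)
Definition leslie {C : pzSemiRingType} {n : nat} (s : nat -> C) (G : C) (a b : 'I_n.+1) : C :=
  (if (a == ord0) && (b == ord_max) then G else 0)
  + (if (a : nat) == b.+1 then s b else 0)
  + (if (a == ord_max) && (b == ord_max) then s n else 0).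

Lemma leslie_fecundityE (C : pzSemiRingType) (n : nat) (s : nat -> C) (G : C) (a b : 'I_n.+1) :
  leslie s G a b = leslie s 0 a b + ((a == ord0) && (b == ord_max))%:R * G.
Proof. by rewrite /leslie; case: ifP => _; rewrite ?mul1r ?mul0r ?addr0 // add0r -addrA addrC. Qed.

Section LeslieLeftEigenvectors.
Variables (C : numFieldType) (n : nat) (s : nat -> C) (G mu : C) (u : 'I_n.+1 -> C).

Lemma leslie_col_sum (b : 'I_n.+1) :
  \sum_a u a * leslie s G a b =
  if b == ord_max then u ord0 * G + u ord_max * s n else u (inord b.+1) * s b.
Proof.
have sum1 c x : \sum_a u a * (if a == c then x else 0) = u c * x.
  by rewrite (bigD1 c) //= eqxx big1 ?addr0 // => a /negbTE ->; rewrite mulr0.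
rewrite /leslie; have [-> | bmax] := eqVneq b ord_max.
  under eq_bigr do rewrite !andbT !mulrDr; rewrite !big_split /= !sum1.
  rewrite big1 ?addr0 // => a _.
  by rewrite ltn_eqF ?mulr0.
have bn : (b < n)%N by rewrite ltn_neqAle -ltnS ltn_ord andbT -val_eqE in bmax *.
under eq_bigr => a _.
  rewrite !andbF !addr0 add0r.
  have -> : ((a : nat) == b.+1) = (a == inord b.+1) by rewrite -val_eqE /= inordK.
  over.
exact: sum1.
Qed.

Hypothesis eig : forall b, \sum_a u a * leslie s G a b = mu * u b.

Lemma leslie_eigen_survival b : (b < n)%N -> u (inord b.+1) * s b = mu * u (inord b).
Proof.
move=> bn; have bn1 : (b < n.+1)%N by rewrite ltnW.
rewrite -eig leslie_col_sum ifN; first by rewrite inordK.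
by rewrite -val_eqE /= inordK ?ltn_eqF.
Qed.

Lemma leslie_eigen_adult : u ord0 * G + u ord_max * s n = mu * u ord_max.
Proof. by rewrite -eig leslie_col_sum eqxx. Qed.

Lemma leslie_eigen_backward k : (k <= n)%N ->
  u (inord (n - k)) * mu ^+ k = (\prod_(n - k <= a < n) s a) * u ord_max.
Proof.
elim: k => [|k IH] kn.
  rewrite subn0 big_geq // mul1r expr0 mulr1; congr u; apply/val_inj.
  by rewrite /= inordK.
have bn : (n - k.+1 < n)%N by rewrite ltn_subrL (leq_ltn_trans _ kn).
rewrite exprS mulrA (mulrC _ mu) -leslie_eigen_survival // subnSK //.
by rewrite mulrAC (IH (ltnW kn)) (big_ltn bn) subnSK // mulrAC [s _ * _]mulrC.
Qed.

Lemma leslie_eigen_adult_neq0 : mu != 0 -> (exists a, u a != 0) -> u ord_max != 0.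
Proof.
move=> mu0 [a ua]; apply: contraNneq ua => umax0.
have := leslie_eigen_backward _ (leq_subr a n).
rewrite umax0 mulr0 (subKn (leq_ord a)) => /eqP.
rewrite mulf_eq0 expf_eq0 (negbTE mu0) andbF orbF.
by have -> : (inord a : 'I_n.+1) = a by apply/val_inj; rewrite /= inordK.
Qed.

Lemma leslie_char_eq : u ord_max != 0 -> G * \prod_(a < n) s a = mu ^+ n * (mu - s n).
Proof.
move=> umax0; apply: (mulfI umax0).
have := leslie_eigen_backward _ (leqnn n); rewrite subnn big_mkord.
have -> : (inord 0 : 'I_n.+1) = ord0 by apply/val_inj; rewrite /= inordK.
move=> back0; have := congr1 (fun x => x * mu ^+ n) leslie_eigen_adult.
rewrite mulrDl (mulrAC (u ord0)) back0 => h.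
have -> : u ord_max * (G * \prod_(a < n) s a) = \prod_(a < n) s a * u ord_max * G by ring.
rewrite -[\prod_(a < n) s a * u ord_max * G](addrK (u ord_max * s n * mu ^+ n)) h.
ring.
Qed.

Lemma leslie_eigen_lt1 :
  0 <= s n -> 0 <= G * \prod_(a < n) s a -> G * \prod_(a < n) s a < 1 - s n ->
  (exists a, u a != 0) -> `|mu| < 1.
Proof.
move=> sn0 GP0 GP1 u0.
rewrite real_ltNge ?normr_real ?real1 //; apply/negP => mu1.
have mu0 : mu != 0 by apply: contraTneq mu1 => ->; rewrite normr0 ler10.
have := leslie_char_eq (leslie_eigen_adult_neq0 mu0 u0).
move/(congr1 (@Num.norm _ C)); rewrite (ger0_norm GP0) normrM normrX => GPE.
have : 1 - s n <= G * \prod_(a < n) s a.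
  rewrite GPE; apply: le_trans (ler_peMl (normr_ge0 _) (exprn_ege1 n mu1)).
  by apply: le_trans (lerB_dist _ _); rewrite (ger0_norm sn0) lerD2r.
by rewrite (lt_geF GP1).
Qed.

End LeslieLeftEigenvectors.

Section CDMJacobian.
Variables (R : realType) (m : nat) (delta : 'I_m -> nat) (sigma : 'I_m -> nat -> R)
  (lambda : 'I_m -> R) (A : 'M[R]_m) (q : 'I_m -> R) (yhat : age_idx delta -> R) (j : 'I_m).
Hypothesis adult_j0 : adults yhat j = 0.

Local Notation h := (cdm_map sigma lambda A q).
Local Notation J := (partial_deriv h yhat).
Local Notation perturb r t := (fun s => yhat s + (if s == r then t else 0)).
Local Notation class a := (existT (fun i => 'I_(delta i).+1) j a).

Lemma cdm_map_perturb_cross (a : 'I_(delta j).+1) r t :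
  projT1 r != j -> h (perturb r t) (class a) = h yhat (class a).
Proof.
move=> rj; have yj0 : yhat (class ord_max) = 0 := adult_j0.
have nr c : (class c == r) = false by apply/negbTE; apply: contra rj => /eqP <-.
rewrite /cdm_map !nr !addr0; case: ifP => // a0; case: ifP => d0.
  have -> : a = ord_max by apply/val_inj => /=; rewrite (eqP a0) (eqP d0).
  by rewrite yj0 !mulr0.
by rewrite yj0 !mulr0.
Qed.

Lemma Gfun_perturb b t :
  Gfun lambda A q j (adults (perturb (class b) t)) = lambda j /
    (1 + (q j)^-1 * \sum_(k < m) A j k * adults yhat k
     + (q j)^-1 * (if b == ord_max then A j j else 0) * t).
Proof.
rewrite /Gfun /adults -addrA -mulrA -mulrDr; congr (_ / (1 + _ * _)).
under eq_bigr do rewrite mulrDr; rewrite big_split /=; congr (_ + _).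
rewrite (bigD1 j) //= eq_Tagged /= eq_sym big1 => [|k kj].
  by case: eqP; rewrite ?mulr0 ?mul0r ?addr0.
have -> : (existT _ k ord_max == class b) = false.
  by apply/negbTE; apply: contra kj => /eqP/(congr1 (@projT1 _ _)) /= ->.
by rewrite mulr0.
Qed.

Lemma cdm_map_perturb_block a b t :
  h (perturb (class b) t) (class a) =
  h yhat (class a) + t * leslie (sigma j) (Gfun lambda A q j (adults (perturb (class b) t))) a b.
Proof.
have yj0 : yhat (class ord_max) = 0 := adult_j0.
rewrite /cdm_map /leslie !eq_Tagged /=.
case: a => [[|a'] ha] /=.
  have [d0 | d0] := eqVneq (delta j) 0%N.
    have amax : Ordinal ha = ord_max by apply/val_inj; rewrite /= d0.
    have bmax : b = ord_max.
      apply/val_inj/eqP; rewrite /= eqn_leq leq_ord /=.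
      by apply: (@leq_trans 0); rewrite ?d0.
    have -> : sigma j (delta j) = sigma j 0 by rewrite d0.
    rewrite amax bmax yj0 !eqxx /=.
    ring.
  have -> : (Ordinal ha == ord_max) = false by rewrite -val_eqE /= eq_sym (negbTE d0).
  rewrite yj0 [ord_max == b]eq_sym; case: eqP => _ /=; ring.
have -> : (inord a' == b) = (a' == b) by rewrite -val_eqE /= inordK // ltnW.
have -> : (Ordinal ha == ord_max) = (a'.+1 == delta j) by rewrite -val_eqE.
rewrite yj0 /=; case: ltnP => [lt_a | ge_a].
  rewrite (ltn_eqF lt_a) eqSS; case: (a' =P b) => [-> | _]; rewrite ?eqxx /=; ring.
have -> : a'.+1 == delta j by rewrite eqn_leq ge_a -ltnS ha.
rewrite eqSS [ord_max == b]eq_sym.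
by case: (a' =P b) => [-> | _]; case: (b =P ord_max) => _; rewrite ?eqxx /=; ring.
Qed.

Lemma cdm_jacobian_cross a r : projT1 r != j -> J (class a) r = 0.
Proof.
move=> rj; rewrite /partial_deriv (@derive1_caratheodory _ _ (cst 0)) // => t.
by rewrite !cdm_map_perturb_cross // mulr0 addr0.
Qed.

Lemma cdm_jacobian_block a b :
  1 + (q j)^-1 * \sum_(k < m) A j k * adults yhat k != 0 ->
  J (class a) (class b) = leslie (sigma j) (Gfun lambda A q j (adults yhat)) a b.
Proof.
move=> D0; pose Gt t := Gfun lambda A q j (adults (perturb (class b) t)).
have dG : derivable Gt 0 1.
  rewrite /Gt; under eq_fun do rewrite Gfun_perturb.
  by apply: derivable_div_affine; rewrite mulr0 addr0.
pose c : R := ((a == ord0) && (b == ord_max))%:R.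
rewrite /partial_deriv (@derive1_caratheodory _ _ (cst (leslie (sigma j) 0 a b) + cst c * Gt)).
- rewrite !fctE /Gt [in RHS]leslie_fecundityE; congr (_ + c * Gfun _ _ _ _ _).
  by apply/funext => k; rewrite /adults; case: ifP; rewrite addr0.
- exact: derivableD (derivable_cst _ _ _) (derivableM (derivable_cst _ _ _) dG).
- by move=> t; rewrite !cdm_map_perturb_block !fctE -!leslie_fecundityE subr0 mul0r addr0.
Qed.

Lemma cdm_invader_eigen_lt1 (mu : R[i]) (v : age_idx delta -> R[i]) :
  (forall a, (a < delta j)%N -> 0 <= sigma j a) -> 0 < sigma j (delta j) < 1 ->
  0 < lambda j -> (forall k, 0 <= A j k) -> 0 < q j -> (forall p, 0 <= yhat p) ->
  (lambda_tilde delta sigma lambda j - zrate delta sigma j) / zrate delta sigma j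
    < (q j)^-1 * \sum_(k < m) A j k * adults yhat k ->
  left_eigen_on [set p | projT1 p == j] (fun p r => (J p r)%:C) mu v ->
  (exists a, v (class a) != 0) -> `|mu| < 1.
Proof.
move=> sig_ge0 /andP[sd_gt0 sd_lt1] lam_gt0 A_ge0 q_gt0 y_ge0 invasion eig v0.
have D_ge0 : 0 <= (q j)^-1 * \sum_(k < m) A j k * adults yhat k.
  apply: mulr_ge0; first by rewrite invr_ge0 ltW.
  by apply: sumr_ge0 => k _; apply: mulr_ge0 (A_ge0 k) (y_ge0 _).
have D_gt0 : 0 < 1 + (q j)^-1 * \sum_(k < m) A j k * adults yhat k by rewrite ltr_wpDr.
have P_ge0 : 0 <= \prod_(a < delta j) sigma j a.
  by apply: prodr_ge0 => a _; apply: sig_ge0.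
apply: (@leslie_eigen_lt1 _ _ (fun k => (sigma j k)%:C) (Gfun lambda A q j (adults yhat))%:C
  _ (fun a => v (class a))) => //.
- move=> b; have := eig (class b); rewrite inE eqxx => /(_ isT) <-.
  rewrite (eq_bigl (fun p => tag p == j)) => [|p]; last by rewrite inE.
  rewrite sum_tag_eq; apply: eq_bigr => a _; rewrite cdm_jacobian_block ?gt_eqF //.
  by rewrite /leslie !rmorphD; do 3 case: ifP => _; rewrite ?rmorph0.
- by rewrite lecR ltW.
- by rewrite -rmorph_prod -rmorphM lecR mulr_ge0 // divr_ge0 // ltW.
- rewrite -rmorph_prod -rmorphM -[1 in X in _ < X](rmorph1 (real_complex R)) -rmorphB ltcR.
  rewrite /Gfun mulrAC; apply: ltr_div1D_of_ltr_subdiv => //.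
  by rewrite subr_gt0.
Qed.

End CDMJacobian.

Theorem corollary1 (R : realType) (m : nat) (delta : 'I_m -> nat)
  (sigma : 'I_m -> nat -> R) (lambda : 'I_m -> R) (A : 'M[R]_m) (q : 'I_m -> R)
  (Hm : (0 < m)%N)
  (Hsig_juv : forall i a, (a < delta i)%N -> 0 < sigma i a <= 1)
  (Hsig_ad : forall i, 0 < sigma i (delta i) < 1)
  (Hlam : forall i, 0 < lambda i)
  (HA : forall i k, 0 <= A i k) (HAdiag : forall i, 0 < A i i)
  (Hq : forall i, 0 < q i)
  (Z : {set 'I_m}) (HZ : (0 < #|Z|)%N)
  (yhat : age_idx delta -> R)
  (Hyhat_nonneg : forall p, 0 <= yhat p)
  (Hfix : cdm_map sigma lambda A q yhat = yhat)
  (HxZ : forall i, i \in Z -> adults yhat i = 0)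
  (HxnZ : forall i, i \notin Z -> 0 < adults yhat i)
  (Hsub : spectral_radius_lt1
     (principal_submx [set p : age_idx delta | projT1 p \notin Z]
        (partial_deriv (cdm_map sigma lambda A q) yhat)))
  (Hinv : forall i, i \in Z ->
     (lambda_tilde delta sigma lambda i - zrate delta sigma i) / zrate delta sigma i
       < (q i)^-1 * \sum_(k < m | k \notin Z) A i k * adults yhat k) :
  spectral_radius_lt1 (jacobian_mx (cdm_map sigma lambda A q) yhat).
Proof.
move=> mu; rewrite /jacobian_mx map_principal_submx.
case/eigenvalue_principal_submxP => v [[j a0] _ v0] eig.
set J := partial_deriv _ yhat in Hsub eig *.
have cross p r : projT1 p \in Z -> projT1 r != projT1 p -> J p r = 0.
  by case: p => i a /= iZ; apply: cdm_jacobian_cross; exact: HxZ.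
pose S := [set p : age_idx delta | projT1 p \notin Z].
case: (boolP [exists p in S, v p != 0]) => [/exists_inP [p pS vp] | /exists_inPn vS].
  apply: Hsub; rewrite map_principal_submx; apply/eigenvalue_principal_submxP.
  exists v; first by exists p.
  apply: (left_eigen_on_sub eig) => [|p' r]; first exact: finset.subsetT.
  rewrite !inE andbT negbK => p'Z rS; rewrite cross ?mulr0 //.
  by apply: contraNneq rS => ->.
have jZ : j \in Z by apply: contraR v0 => jZ; apply/negPn/vS; rewrite inE.
apply: (@cdm_invader_eigen_lt1 R m delta sigma lambda A q yhat j (HxZ j jZ) mu v _
  (Hsig_ad j) (Hlam j) (HA j) (Hq j) Hyhat_nonneg).
- by move=> a /(Hsig_juv j) /andP[/ltW].
- rewrite (bigID (mem Z)) /= big1 ?add0r => [|k kZ]; first exact: Hinv.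
  by rewrite HxZ ?mulr0.
- apply: (left_eigen_on_sub eig) => [|p r]; first exact: finset.subsetT.
  rewrite !inE andbT => pj /eqP rj; have [pZ | pZ] := boolP (projT1 p \in Z).
    by rewrite cross ?mulr0 // rj eq_sym.
  have /negbNE/eqP -> : ~~ (v p != 0) by apply: vS; rewrite inE.
  by rewrite mul0r.
- by exists a0.
Qed.
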